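(* Let $G_1,G_2$ be countable infinite groups, $\Sigma$ a finite set, $\phi:G_1\to G_2$ a surjective group homomorphism, and let $X\subseteq\Sigma^{G_2}$ and $Y\subseteq\Sigma^{G_1}$ be minimal subshifts. If $\pi:X\to Y$ is a surjective continuous map that is $\phi$-equivariant, i.e. $\sigma_{G_1}^g\pi(x)=\pi(\sigma_{G_2}^{\phi(g)}x)$ for all $g\in G_1$, $x\in X$, then $(\pi\times\dots\times\pi)(\mathrm{IN}_n(X))=\mathrm{IN}_n(Y)$ for each $n\in\mathbb N$.
   Context: $\Sigma^{G_i}$ has the product topology and shift $\sigma_{G_i}^g(x)(h)=x(g^{-1}h)$; a subshift is a nonempty closed shift-invariant set, minimal if all orbits are dense. For a $G$-system $(Z,\varphi,G)$ and subsets $A_1,\dots,A_k\subseteq Z$, $J\subseteq G$ is an independence set if $\bigcap_{g\in I}\varphi^{g^{-1}}A_{s(g)}\neq\emptyset$ for every nonempty finite $I\subseteq J$ and every $s:I\to\{1,\dots,k\}$. $\mathrm{IN}_n(Z)$ is the set of $(z_1,\dots,z_n)\in Z^n$ such that for every product neighborhood $U_1\times\dots\times U_n$ of it, $(U_1,\dots,U_n)$ has arbitrarily large finite independence sets. *)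

From mathcomp Require Import all_boot.
From Stdlib Require List.

Set Implicit Arguments.
Unset Strict Implicit.
Unset Printing Implicit Defensive.

Record DGroup := {
  gcarrier :> Type;
  gmul : gcarrier -> gcarrier -> gcarrier;
  gone : gcarrier;
  ginv : gcarrier -> gcarrier;
  gmulA : forall a b c, gmul a (gmul b c) = gmul (gmul a b) c;
  gmul1 : forall a, gmul gone a = a;
  gmulg1 : forall a, gmul a gone = a;
  gmulV : forall a, gmul (ginv a) a = gone;
  gmulgV : forall a, gmul a (ginv a) = gone
}.

Definition countable_type (T : Type) : Prop :=
  exists f : T -> nat, forall a b, f a = f b -> a = b.

Definition infinite_type (T : Type) : Prop :=
  ~ exists l : list T, forall a, List.In a l.

Definition group_hom (G1 G2 : DGroup) (phi : G1 -> G2) : Prop :=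
  forall a b, phi (gmul a b) = gmul (phi a) (phi b).

Definition cfg (G : DGroup) (Sigma : finType) := G -> Sigma.

Definition shift (G : DGroup) (Sigma : finType) (g : G) (x : cfg G Sigma)
  : cfg G Sigma := fun h => x (gmul (ginv g) h).

(* open sets of the product topology on Sigma^G (Sigma discrete):
   every point of U has a cylinder neighbourhood inside U *)
Definition open_cfg (G : DGroup) (Sigma : finType) (U : cfg G Sigma -> Prop)
  : Prop :=
  forall x, U x -> exists F : list G,
    forall y : cfg G Sigma, (forall h, List.In h F -> y h = x h) -> U y.

Definition closed_cfg (G : DGroup) (Sigma : finType) (C : cfg G Sigma -> Prop)
  : Prop := open_cfg (fun x => ~ C x).

Definition subshift (G : DGroup) (Sigma : finType) (X : cfg G Sigma -> Prop)
  : Prop :=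
  (exists x, X x) /\ closed_cfg X /\
  (forall g x, X x -> X (shift g x)).

Definition minimal_subshift (G : DGroup) (Sigma : finType)
  (X : cfg G Sigma -> Prop) : Prop :=
  subshift X /\
  forall x, X x -> forall V : cfg G Sigma -> Prop, open_cfg V ->
    (exists y, X y /\ V y) -> exists g, V (shift g x).

Definition nbhd_in (G : DGroup) (Sigma : finType) (Z : cfg G Sigma -> Prop)
  (z : cfg G Sigma) (U : cfg G Sigma -> Prop) : Prop :=
  (forall y, U y -> Z y) /\
  exists V, open_cfg V /\ V z /\ (forall y, Z y -> V y -> U y).

Definition indep_set (G : DGroup) (Sigma : finType) (Z : cfg G Sigma -> Prop)
  (k : nat) (A : 'I_k -> cfg G Sigma -> Prop) (J : list G) : Prop :=
  forall (I : list G), I <> nil -> (forall g, List.In g I -> List.In g J) ->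
  forall s : G -> 'I_k,
    exists z, Z z /\ forall g, List.In g I -> A (s g) (shift g z).

Definition arb_large_indep (G : DGroup) (Sigma : finType)
  (Z : cfg G Sigma -> Prop) (k : nat) (A : 'I_k -> cfg G Sigma -> Prop)
  : Prop :=
  forall N : nat, exists J : list G,
    List.NoDup J /\ (N <= length J)%coq_nat /\ indep_set Z A J.

Definition IN (G : DGroup) (Sigma : finType) (Z : cfg G Sigma -> Prop)
  (n : nat) (z : 'I_n -> cfg G Sigma) : Prop :=
  (forall i, Z (z i)) /\
  forall U : 'I_n -> cfg G Sigma -> Prop,
    (forall i, nbhd_in Z (z i) (U i)) -> arb_large_indep Z U.

Definition continuous_on (G1 G2 : DGroup) (Sigma : finType)
  (X : cfg G2 Sigma -> Prop) (pi : cfg G2 Sigma -> cfg G1 Sigma) : Prop :=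
  forall V : cfg G1 Sigma -> Prop, open_cfg V ->
    exists W : cfg G2 Sigma -> Prop, open_cfg W /\
      forall x, X x -> (V (pi x) <-> W x).

(* If x lies in IN_n(X), the preimages under pi of neighbourhoods of the pi x_i
   are neighbourhoods of the x_i, and by equivariance an independence set J in X
   yields the independence set s(J) in Y for any section s of phi.

   Conversely, let y lie in IN_n(Y).  Enumerating G2, we fix the coordinates of
   x one at a time, keeping the invariant that for every radius m the sets
   {z in X | pi z is m-close to y_i and z agrees with x_i on the coordinates
   fixed so far} have arbitrarily large independence sets.  Fixing one more
   coordinate splits each set into |Sigma| pieces, and the invariant survives by
   the key combinatorial fact: if A_1 is contained in B u C and (A_1, ..., A_k)
   has arbitrarily large independence sets, then so has (B, A_2, ..., A_k) or
   (C, A_2, ..., A_k); it follows from a weighted Sauer-Shelah-Pajor shattering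
   inequality.  The invariant holds initially: if two y_i differ, phi is
   injective on independence sets of small neighbourhoods of the y_i, which
   therefore lift to X; if all y_i coincide, minimality of X gives infinitely
   many return times of a point over y_1 to a neighbourhood of it.  The limit x
   lies in X since X is closed, satisfies pi x_i = y_i by continuity, and lies
   in IN_n(X) by the invariant. *)

From mathcomp Require Import all_boot zify.
From Stdlib Require List.
From Stdlib Require Import ClassicalEpsilon Classical FunctionalExtensionality.

Set Implicit Arguments.
Unset Strict Implicit.
Unset Printing Implicit Defensive.

(** * Weighted shattering *)

Lemma big_tuple0 (T : finType) (F : 0.-tuple T -> nat) :
  \sum_(w : 0.-tuple T) F w = F [tuple].
Proof. by rewrite (big_pred1 [tuple]) // => w /=; rewrite (tuple0 w); apply/esym/eqP. Qed.

Lemma big_tuple_cons (T : finType) m (F : m.+1.-tuple T -> nat) :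
  \sum_(w : m.+1.-tuple T) F w =
  \sum_(t : T) \sum_(w : m.-tuple T) F (cons_tuple t w).
Proof.
rewrite pair_big /= (reindex (fun p : T * m.-tuple T => cons_tuple p.1 p.2)) //=.
exists (fun w : m.+1.-tuple T => (thead w, behead_tuple w)) => [[t w]|w] _ /=.
  by congr pair; apply: val_inj.
by case/tupleP: w => t w; apply: val_inj.
Qed.

Lemma sum_prod_tuple (T : finType) (nu : T -> nat) m :
  \sum_(s : m.-tuple T) \prod_(x <- s) nu x = (\sum_t nu t) ^ m.
Proof.
elim: m => [|m IH]; first by rewrite big_tuple0 big_nil.
rewrite big_tuple_cons expnS big_distrl /=; apply: eq_bigr => t _.
by rewrite -IH big_distrr /=; apply: eq_bigr => w _; rewrite big_cons.
Qed.

Lemma big_option_bool (F : option bool -> nat) :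
  \sum_(o : option bool) F o = F None + F (Some true) + F (Some false).
Proof.
rewrite (bigD1 None) // (bigD1 (Some true)) // (bigD1 (Some false)) //=.
by rewrite big_pred0 ?addn0 ?addnA // => -[[]|].
Qed.

Lemma leq_mul_implyb (a b : bool) x y : (a -> b) -> y * (x * a) <= b * (x * y).
Proof.
case: a; case: b => //= ab; rewrite ?muln1 ?mul1n ?muln0 //; first by rewrite mulnC.
by have := ab isT.
Qed.

Lemma leq_expn2r a b e : a <= b -> a ^ e <= b ^ e.
Proof. by move=> le_ab; elim: e => // e IH; rewrite !expnS leq_mul. Qed.

Section WeightedShattering.

Variables (L : finType) (mu : L -> nat) (al be : nat) (D : bool -> {set L}).

(* The case [m = 1] of [mass_le_shattered_weight]: a set [T] of letters
   shatters [None] iff it is nonempty, and [Some X] iff it contains [D X]. *)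
Hypothesis mu_bound : forall T : {set L},
  \sum_(l in T) mu l <= al * (T != set0) + be * (D true \subset T) + be * (D false \subset T).

Fixpoint admits (pi : seq (option bool)) (p : seq L) : bool :=
  match pi, p with
  | o :: pi', l :: p' => (if o is Some X then l \in D X else true) && admits pi' p'
  | _, _ => true
  end.

Fixpoint matches (pi : seq (option bool)) (w p : seq L) : bool :=
  match pi, w, p with
  | o :: pi', a :: w', b :: p' => ((o == None) || (a == b)) && matches pi' w' p'
  | _, _, _ => true
  end.

Definition shatters m (S : {set m.-tuple L}) (pi : m.-tuple (option bool)) : bool :=
  [forall p : m.-tuple L, admits pi p ==> [exists w in S, matches pi w p]].

Definition pattern_weight (pi : seq (option bool)) : nat :=
  \prod_(o <- pi) (if o is Some _ then be else al).

Definition mass m (S : {set m.-tuple L}) : nat := \sum_(w in S) \prod_(l <- w) mu l.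

Definition shattered_weight m (S : {set m.-tuple L}) : nat :=
  \sum_(pi : m.-tuple (option bool)) shatters S pi * pattern_weight pi.

Definition slice m (S : {set m.+1.-tuple L}) (t : L) : {set m.-tuple L} :=
  [set w | cons_tuple t w \in S].

Lemma shatters_cons_None m (S : {set m.+1.-tuple L}) pi t :
  shatters (slice S t) pi -> shatters S (cons_tuple None pi).
Proof.
move/forallP=> Sh; apply/forallP => p; apply/implyP; case/tupleP: p => l p /= adm.
have /implyP/(_ adm)/existsP [w /andP [Sw m_wp]] := Sh p.
by apply/existsP; exists (cons_tuple t w); rewrite inE in Sw; rewrite /= Sw m_wp.
Qed.

Lemma shatters_cons_Some m (S : {set m.+1.-tuple L}) pi X :
  (forall t, t \in D X -> shatters (slice S t) pi) -> shatters S (cons_tuple (Some X) pi).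
Proof.
move=> Sh; apply/forallP => p; apply/implyP; case/tupleP: p => l p /= /andP [Dl adm].
have /forallP/(_ p)/implyP/(_ adm)/existsP [w /andP [Sw m_wp]] := Sh l Dl.
by apply/existsP; exists (cons_tuple l w); rewrite inE in Sw; rewrite /= Sw eqxx m_wp.
Qed.

Lemma mass_slice m (S : {set m.+1.-tuple L}) :
  mass S = \sum_t mu t * mass (slice S t).
Proof.
rewrite /mass big_mkcond big_tuple_cons; apply: eq_bigr => t _.
rewrite big_distrr [in RHS]big_mkcond /=; apply: eq_bigr => w _.
by rewrite inE big_cons; case: (_ \in S).
Qed.

Lemma shattered_weight_slice m (S : {set m.+1.-tuple L}) :
  \sum_t mu t * shattered_weight (slice S t) <= shattered_weight S.
Proof.
rewrite /shattered_weight big_tuple_cons.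
have -> : \sum_t mu t * (\sum_(pi : m.-tuple _) shatters (slice S t) pi * pattern_weight pi)
    = \sum_(pi : m.-tuple (option bool))
        pattern_weight pi * \sum_(t in [set t | shatters (slice S t) pi]) mu t.
  under eq_bigr => t _ do rewrite big_distrr /=.
  rewrite exchange_big /=; apply: eq_bigr => pi _.
  rewrite big_distrr /= [in RHS]big_mkcond /=; apply: eq_bigr => t _.
  by rewrite inE; case: shatters; rewrite ?mul1n ?mul0n ?muln0 // mulnC.
rewrite exchange_big /=; apply: leq_sum => pi _.
rewrite big_option_bool /pattern_weight !big_cons /= -/(pattern_weight pi).
set T := [set t | shatters (slice S t) pi].
apply: leq_trans (leq_mul (leqnn _) (mu_bound T)) _.
rewrite !mulnDr; apply: leq_add; first apply: leq_add.
- by apply: leq_mul_implyb => /set0Pn [t]; rewrite inE; apply: shatters_cons_None.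
- by apply: leq_mul_implyb => /subsetP sub; apply: shatters_cons_Some => t /sub; rewrite inE.
- by apply: leq_mul_implyb => /subsetP sub; apply: shatters_cons_Some => t /sub; rewrite inE.
Qed.

(* A weighted form of Pajor's generalisation of the Sauer-Shelah lemma. *)
Lemma mass_le_shattered_weight m (S : {set m.-tuple L}) : mass S <= shattered_weight S.
Proof.
elim: m S => [|m IH] S; last first.
  rewrite mass_slice; apply: leq_trans (shattered_weight_slice S).
  by apply: leq_sum => t _; rewrite leq_mul.
rewrite /shattered_weight big_tuple0.
have [->|[w Sw]] := set_0Vmem S; first by rewrite /mass big_set0.
have -> : shatters S [tuple].
  apply/forallP => p; apply/implyP => _; apply/existsP; exists w.
  by rewrite Sw (tuple0 w) (tuple0 p).
rewrite /pattern_weight big_nil mul1n /mass (eq_bigr (fun _ => 1)); last first.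
  by move=> u _; rewrite (tuple0 u) big_nil.
by rewrite sum1_card (leq_trans (max_card _)) // card_tuple.
Qed.

Definition sparse_weight m d : nat :=
  \sum_(pi : m.-tuple (option bool) | count isSome pi < d) pattern_weight pi.

Lemma exists_shattered_pattern m (S : {set m.-tuple L}) d :
  sparse_weight m d < mass S ->
  exists2 pi : m.-tuple (option bool), shatters S pi & d <= count isSome pi.
Proof.
move=> sparse_lt; apply: NNPP => no_pi; move: sparse_lt; apply/negP; rewrite -leqNgt.
apply: leq_trans (mass_le_shattered_weight S) _.
rewrite /shattered_weight (bigID (fun pi : m.-tuple _ => count isSome pi < d)) /=.
rewrite [X in _ + X]big1 ?addn0; last first.
  move=> pi; rewrite -leqNgt => d_le; case Sh: shatters => //.
  by case: no_pi; exists pi.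
by apply: leq_sum => pi _; case: shatters; rewrite ?mul1n.
Qed.

Lemma sparse_weight_recr m d :
  sparse_weight m.+1 d.+1 =
  al * sparse_weight m d.+1 + be * sparse_weight m d + be * sparse_weight m d.
Proof.
rewrite /sparse_weight big_mkcond big_tuple_cons big_option_bool !big_distrr /=.
by congr (_ + _ + _); rewrite [in RHS]big_mkcond; apply: eq_bigr => w _;
  rewrite /pattern_weight big_cons /=; case: ifP; rewrite ?muln0.
Qed.

Hypotheses (al_gt0 : 0 < al) (be_gt0 : 0 < be).

Lemma sparse_weight_bound m d : sparse_weight m d <= (2 * be) ^ d * m.+1 ^ d * al ^ m.
Proof.
elim: m d => [|m IH] d.
  rewrite /sparse_weight big_mkcond big_tuple0 /pattern_weight big_nil exp1n !muln1.
  by case: ifP => // _; rewrite expn_gt0 muln_gt0 be_gt0.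
case: d => [|d]; first by rewrite /sparse_weight big_pred0.
rewrite sparse_weight_recr.
move: (IH d.+1) (IH d) (leq_expn2r d (leqnSn m.+1)).
rewrite !expnS; move: (sparse_weight m d.+1) (sparse_weight m d) => N1 N2.
set K := 2 * be; set P := K ^ d; set A := m.+1 ^ d; set B := m.+2 ^ d; set Q := al ^ m.
move=> le_N1 le_N2 le_AB.
have -> : al * N1 + be * N2 + be * N2 = al * N1 + K * N2 by rewrite /K; lia.
apply: leq_trans (leq_add (leq_mul (leqnn al) le_N1) (leq_mul (leqnn K) le_N2)) _.
have -> : al * (K * P * (m.+1 * A) * Q) + K * (P * A * Q) =
    K * P * Q * (al * m.+1 * A + A) by rewrite !mulnA; nia.
have -> : K * P * (m.+2 * B) * (al * Q) = K * P * Q * (al * m.+2 * B)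
  by rewrite !mulnA; nia.
by rewrite leq_mul //; nia.
Qed.

End WeightedShattering.

Section ShatteringByPositions.

Variables (L : finType) (D : bool -> {set L}).

Lemma admits_nth (pi : seq (option bool)) (p : seq L) :
  size pi = size p ->
  (forall j X l0, nth None pi j = Some X -> nth l0 p j \in D X) -> admits D pi p.
Proof.
elim: pi p => [|o pi IH] [|l p] //= [size_pi] Dp; apply/andP; split.
  by case: o Dp => // X /(_ 0 X l); apply.
by apply: IH => // j; apply: (Dp j.+1).
Qed.

Lemma matches_nth (pi : seq (option bool)) (w p : seq L) l0 :
  matches pi w p -> size pi = size w -> size pi = size p ->
  forall j, nth None pi j != None -> nth l0 w j = nth l0 p j.
Proof.
elim: pi w p => [|o pi IH] [|a w] [|b p] //= /andP [eq_ab m_wp] [size_w] [size_p].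
by case=> [|j] /= o_Some; [move: eq_ab; rewrite (negbTE o_Some) => /eqP | apply: IH].
Qed.

Lemma shattersP m (S : {set m.-tuple L}) (pi : m.-tuple (option bool)) :
  shatters D S pi ->
  forall q : 'I_m -> L, (forall j X, tnth pi j = Some X -> q j \in D X) ->
  exists2 w, w \in S & forall j, tnth pi j != None -> tnth w j = q j.
Proof.
move=> /forallP Sh q Dq; pose p := [tuple q j | j < m].
have adm : admits D pi p.
  apply: admits_nth; first by rewrite !size_tuple.
  move=> j X l0; have [lt_jm|le_mj] := ltnP j m; last by rewrite nth_default ?size_tuple.
  rewrite -[nth None _ _](tnth_nth _ _ (Ordinal lt_jm)).
  by rewrite -[nth l0 _ _](tnth_nth _ _ (Ordinal lt_jm)) tnth_mktuple; apply: Dq.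
have /existsP [w /andP [Sw m_wp]] := implyP (Sh p) adm.
exists w => // j pi_j; rewrite (tnth_nth (q j)) (matches_nth (q j) m_wp) ?size_tuple //.
  by rewrite -tnth_nth tnth_mktuple.
by rewrite -tnth_nth.
Qed.

End ShatteringByPositions.

Lemma bernoulli_nat x n : x ^ n * (x + n) <= (x + 1) ^ n * x.
Proof.
elim: n => [|n IH]; first by rewrite !expn0 addn0.
by move: IH; rewrite !expnS; set X := x ^ n; set Y := (x + 1) ^ n; nia.
Qed.

Lemma double_expnn_le a : 0 < a -> 2 * a ^ a <= (a + 1) ^ a.
Proof.
move=> a_gt0; rewrite -(leq_pmul2r a_gt0); apply: leq_trans (bernoulli_nat a a).
by rewrite addnn -mul2n; nia.
Qed.

Lemma linear_le_exp2 c P : exists i, c * i.+1 <= 2 ^ i /\ P < 2 ^ i.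
Proof.
set u := 2 * c + P; exists (2 * u).
have u_lt : u < 2 ^ u by apply: ltn_expl.
rewrite expnM (_ : (2 ^ 2) ^ u = 2 ^ u * 2 ^ u); last by rewrite -expnMn.
by move: u_lt; set E := 2 ^ u; split; nia.
Qed.

Lemma poly_lt_exp2 P d : exists j, P * j.+1 ^ d < 2 ^ j.
Proof.
have [i [lin_le P_lt]] := linear_le_exp2 d.+1 P.
exists (d.+1 * i); rewrite (_ : 2 ^ _ = 2 ^ i * (2 ^ i) ^ d); last first.
  by rewrite mulnC expnM expnS.
have : (d.+1 * i).+1 ^ d <= (2 ^ i) ^ d by apply/leq_expn2r/(leq_trans _ lin_le); nia.
have : 0 < (2 ^ i) ^ d by rewrite !expn_gt0.
by set E := (2 ^ i) ^ d; set F := (d.+1 * i).+1 ^ d; nia.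
Qed.

Lemma poly_exp_lt_exp a C d : 0 < a -> exists m, C * m.+1 ^ d * a ^ m < a.+1 ^ m.
Proof.
move=> a_gt0; have [j lt_j] := poly_lt_exp2 (C * a ^ d) d.
exists (a * j).
have le_poly : (a * j).+1 ^ d <= a ^ d * j.+1 ^ d by rewrite -expnMn leq_expn2r //; nia.
have le_exp : 2 ^ j * a ^ (a * j) <= a.+1 ^ (a * j).
  by rewrite !expnM -expnMn leq_expn2r // -[a.+1]addn1 double_expnn_le.
have : 0 < a ^ (a * j) by rewrite expn_gt0 a_gt0.
move: le_poly le_exp lt_j; set X := a ^ (a * j); set Y := (a * j).+1 ^ d.
set Z := a ^ d; set V := j.+1 ^ d => le_poly le_exp lt_j X_gt0.
have CY_lt : C * Y < 2 ^ j by apply: leq_ltn_trans lt_j; rewrite -mulnA leq_mul2l le_poly orbT.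
by apply: leq_trans le_exp; rewrite ltn_pmul2r.
Qed.

Lemma count_isSome_bool (pi : seq (option bool)) :
  count isSome pi = count (pred1 (Some true)) pi + count (pred1 (Some false)) pi.
Proof.
elim: pi => [|[[]|] pi IH] //=; rewrite IH;
  by move: (count_mem (Some true) pi) (count_mem (Some false) pi) => a b; lia.
Qed.

(* A word in ['I_k + bool] records, position by position, the index [t] of the
   set [A t] visited by a witness, and at the distinguished index [i0] only
   whether the witness lies in [B] (so [inl i0] never occurs and weighs 0).  The
   weights make the total mass [(4k - 2) ^ m] of such encodings outgrow the
   weight [4 ^ d * m.+1 ^ d * free_weight ^ m] of the patterns with fewer than
   [d] constrained positions. *)
Section LetterEncoding.

Variables (k : nat) (i0 : 'I_k).

Definition letter_weight (l : 'I_k + bool) : nat :=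
  match l with inl t => if t == i0 then 0 else 4 | inr _ => 2 end.

Definition letter_class (X : bool) : {set 'I_k + bool} :=
  [set l | match l with inl t => t != i0 | inr b => b == X end].

Definition free_weight : nat := maxn (4 * k - 4) 1.

Definition letter (t : 'I_k) (b : bool) : 'I_k + bool :=
  if t == i0 then inr b else inl t.

Lemma sum_letter_weight_inl : \sum_(t : 'I_k) letter_weight (inl t) = 4 * (k - 1).
Proof.
rewrite (bigD1 i0) //= eqxx add0n (eq_bigr (fun _ => 4)) => [|t /negbTE -> //].
by rewrite sum_nat_const (@eq_card _ _ (predC1 i0)) // cardC1 card_ord mulnC subn1.
Qed.

Lemma letter_weight_bound (T : {set 'I_k + bool}) :
  \sum_(l in T) letter_weight l <= free_weight * (T != set0) +
    2 * (letter_class true \subset T) + 2 * (letter_class false \subset T).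
Proof.
have [->|_] := eqVneq T set0; first by rewrite big_set0.
have le_free : 4 * (k - 1) <= free_weight by apply: leq_trans (leq_maxl _ _); lia.
rewrite /= muln1 big_mkcond big_sumType /= big_bool /=.
have [all_inl|] := boolP [forall t, (t != i0) ==> (inl t \in T)].
  have class_sub X : inr X \in T -> letter_class X \subset T.
    move=> TX; apply/subsetP => -[t|b]; rewrite inE; last by move/eqP->.
    by move=> t_i0; have /implyP := forallP all_inl t; apply.
  rewrite -addnA leq_add //.
    by apply: leq_trans le_free; rewrite -sum_letter_weight_inl leq_sum // => t _; case: ifP.
  by rewrite leq_add //; case: ifP => // /class_sub ->.
rewrite negb_forall => /existsP [t0]; rewrite negb_imply => /andP [t0_i0 /negbTE t0_T].
rewrite -addnA (leq_trans _ (leq_addr _ _)) // (leq_trans _ le_free) //.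
rewrite -sum_letter_weight_inl (bigD1 t0) //= t0_T add0n [X in _ <= X](bigD1 t0) //=.
rewrite (negbTE t0_i0) addnC; apply: leq_add; first by do 2 case: ifP.
by apply: leq_sum => t _; case: ifP.
Qed.

Lemma letter_inj t b t' b' : letter t b = letter t' b' -> t = t' /\ (t = i0 -> b = b').
Proof.
rewrite /letter; case: (eqVneq t i0) => [->|t_i0]; case: (eqVneq t' i0) => [->|t'_i0] //.
- by case=> ->.
- by case=> eq_t; split=> // t_eq; move: t_i0; rewrite t_eq eqxx.
Qed.

Lemma letter_in_class t X : letter t X \in letter_class X.
Proof. by rewrite /letter inE; case: eqVneq. Qed.

Lemma mass_letter_encoding m (code : m.-tuple 'I_k -> m.-tuple ('I_k + bool)) :
  (forall s j, exists b, tnth (code s) j = letter (tnth s j) b) ->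
  mass letter_weight (code @: setT) = (4 * (k - 1) + 2) ^ m.
Proof.
move=> codeP; have code_inj : injective code.
  move=> s1 s2 eq_code; apply: eq_from_tnth => j.
  have [b1 E1] := codeP s1 j; have [b2 E2] := codeP s2 j.
  by have := @letter_inj (tnth s1 j) b1 (tnth s2 j) b2; rewrite -E1 -E2 eq_code => /(_ erefl) [].
pose nu t := if t == i0 then 2 else 4.
have sum_nu : \sum_t nu t = 4 * (k - 1) + 2.
  rewrite -sum_letter_weight_inl (bigD1 i0) // [in RHS](bigD1 i0) //= /nu eqxx addnC.
  by congr (_ + _); apply: eq_bigr => t /negbTE ->.
rewrite /mass big_imset /=; last by move=> ? ? _ _; apply: code_inj.
rewrite -sum_nu -sum_prod_tuple; apply: eq_big => [s|s _]; first by rewrite inE.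
rewrite !big_tuple; apply: eq_bigr => j _; have [b ->] := codeP s j.
by rewrite /letter /nu; case: ifP => [|/= ->].
Qed.

Lemma sparse_weight_lt_encoding_mass d :
  exists m, sparse_weight free_weight 2 m d < (4 * (k - 1) + 2) ^ m.
Proof.
have free_gt0 : 0 < free_weight by rewrite leq_max orbT.
have [m lt_m] := poly_exp_lt_exp ((2 * 2) ^ d) d free_gt0; exists m.
apply: leq_ltn_trans (sparse_weight_bound free_gt0 _ m d) _ => //.
apply: leq_trans lt_m (leq_expn2r _ _); move: (ltn_ord i0).
by rewrite /free_weight gtn_max; lia.
Qed.

Lemma many_shattered_positions d : exists m,
  forall code : m.-tuple 'I_k -> m.-tuple ('I_k + bool),
  (forall s j, exists b, tnth (code s) j = letter (tnth s j) b) ->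
  exists X (P : seq 'I_m), [/\ uniq P, d <= size P &
    forall q : 'I_m -> 'I_k + bool, (forall j, j \in P -> q j \in letter_class X) ->
    exists s, forall j, j \in P -> tnth (code s) j = q j].
Proof.
have [m sparse_lt] := sparse_weight_lt_encoding_mass d.*2; exists m => code codeP.
have [pi Sh heavy] : exists2 pi, shatters letter_class (code @: setT) pi & d.*2 <= count isSome pi.
  apply: (exists_shattered_pattern letter_weight_bound (S := code @: setT)).
  by rewrite mass_letter_encoding.
have [X le_d] : exists X, d <= count (pred1 (Some X)) pi.
  move: heavy; rewrite count_isSome_bool.
  case: (leqP d (count (pred1 (Some true)) pi)) => [|lt_true le_sum]; first by exists true.
  by exists false; rewrite -(leq_add2l d) addnn (leq_trans le_sum) // leq_add2r ltnW.
exists X, [seq j <- enum 'I_m | tnth pi j == Some X]; split.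
- by rewrite filter_uniq // enum_uniq.
- move: le_d; rewrite -(map_tnth_enum pi) count_map.
  by rewrite (size_filter (fun j => tnth pi j == Some X)).
move=> q qP; pose q' j := if tnth pi j is Some X' then if X' == X then q j else inr X' else q j.
have [|w /imsetP [s _ ->] wq'] := shattersP Sh (q := q').
  move=> j X' piX'; rewrite /q' piX'; case: eqP => [eq_X'|_]; last by rewrite inE.
  by rewrite eq_X'; apply: qP; rewrite mem_filter piX' eq_X' eqxx mem_enum.
exists s => j; rewrite mem_filter => /andP [/eqP piX _].
by rewrite wq' ?piX // /q' piX eqxx.
Qed.

End LetterEncoding.

(** * Splitting independence sets *)

Lemma In_mem (T : eqType) (x : T) (s : seq T) : List.In x s <-> x \in s.
Proof.
elim: s => [|a s IH] //=; rewrite in_cons; split.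
  by case=> [->|/IH ->]; rewrite ?eqxx ?orbT.
by case/orP => [/eqP ->|/IH]; [left|right].
Qed.

Lemma uniq_NoDup (T : eqType) (s : seq T) : uniq s -> List.NoDup s.
Proof.
elim: s => [|a s IH] /=; first by constructor.
by case/andP => a_s uniq_s; constructor; [rewrite In_mem; apply/negP | apply: IH].
Qed.

Lemma infinite_type_fresh (T : Type) :
  infinite_type T -> forall L : list T, exists h, ~ List.In h L.
Proof.
move=> infT L; apply: NNPP => all_in; apply: infT; exists L => a.
by apply: NNPP => a_L; apply: all_in; exists a.
Qed.

Lemma long_NoDup_lists (T : Type) (P : T -> Prop) :
  (forall L, exists2 h, P h & ~ List.In h L) ->
  forall N, exists L, [/\ List.NoDup L, (N <= length L)%coq_nat & forall h, List.In h L -> P h].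
Proof.
move=> fresh; elim=> [|N [L [uniq_L size_L L_P]]]; first by exists nil; split=> //; constructor.
have [h Ph h_L] := fresh L; exists (h :: L); split=> /=; [by constructor | lia |].
by move=> u [<-|/L_P].
Qed.

Section Independence.

Variables (G : DGroup) (Sigma : finType) (Z : cfg G Sigma -> Prop).

Lemma arb_large_indep_mono k (A A' : 'I_k -> cfg G Sigma -> Prop) :
  (forall i z, A i z -> A' i z) -> arb_large_indep Z A -> arb_large_indep Z A'.
Proof.
move=> sub_AA' indepA N; have [J [uniq_J [size_J indep_J]]] := indepA N.
exists J; do 2 split=> //; move=> I I_nil I_J s; have [z [Zz Az]] := indep_J I I_nil I_J s.
by exists z; split=> // g /Az /sub_AA'.
Qed.

Lemma arb_large_indep_nonempty k (A : 'I_k -> cfg G Sigma -> Prop) i :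
  arb_large_indep Z A -> exists c, A i c.
Proof.
move=> /(_ 1) [[|g J] [_ [size_J indep_J]]]; first by inversion size_J.
have sub_J h : List.In h [:: g] -> List.In h (g :: J) by case=> [<-|[]]; left.
have [//|z [_ Az]] := indep_J [:: g] _ sub_J (fun _ => i).
by exists (shift g z); apply: Az; left.
Qed.

Lemma indep_set_tuples k (A : 'I_k -> cfg G Sigma -> Prop) (i0 : 'I_k) J m :
  indep_set Z A J -> List.NoDup J -> J <> nil -> m <= length J ->
  exists (g : 'I_m -> G) (z : m.-tuple 'I_k -> cfg G Sigma),
  [/\ injective g, forall j, List.In (g j) J &
      forall s, Z (z s) /\ forall j, A (tnth s j) (shift (g j) (z s))].
Proof.
move=> indep_J uniq_J J_nil le_mJ; pose g (j : 'I_m) := List.nth j J (gone G).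
have lt_J (j : 'I_m) : (j < length J)%coq_nat by apply/ltP; apply: leq_trans le_mJ.
have g_inj : injective g.
  by move=> j1 j2 /(List.NoDup_nth J (gone G)).1 eq_j; apply/val_inj/eq_j.
have g_J j : List.In (g j) J by apply: List.nth_In.
have witness (s : m.-tuple 'I_k) :
    exists z, Z z /\ forall j, A (tnth s j) (shift (g j) z).
  pose sJ h := if excluded_middle_informative (exists j, g j = h) is left ex_j
    then tnth s (sval (constructive_indefinite_description _ ex_j)) else i0.
  have sJ_g j : sJ (g j) = tnth s j.
    rewrite /sJ; case: excluded_middle_informative => [ex_j|[]]; last by exists j.
    by case: constructive_indefinite_description => j' /= /g_inj ->.
  have [z [Zz Az]] := indep_J J J_nil (fun _ => id) sJ.
  by exists z; split=> // j; rewrite -sJ_g; apply: Az.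
exists g, (fun s => sval (constructive_indefinite_description _ (witness s))).
by split=> // s; case: constructive_indefinite_description.
Qed.

End Independence.

Section SplitOneSet.

Variables (G : DGroup) (Sigma : finType) (Z : cfg G Sigma -> Prop) (k : nat).
Variables (A : 'I_k -> cfg G Sigma -> Prop) (i0 : 'I_k) (B C : cfg G Sigma -> Prop).
Hypothesis A_sub_BC : forall z, A i0 z -> B z \/ C z.

Lemma indep_set_split d : arb_large_indep Z A ->
  exists J, [/\ List.NoDup J, (d <= length J)%coq_nat &
    indep_set Z (dfwith A (i := i0) B) J \/ indep_set Z (dfwith A (i := i0) C) J].
Proof.
move=> indepA; have [m shattered] := many_shattered_positions i0 d.
have [J [uniq_J [/leP size_J indep_J]]] := indepA m.+1.
have J_nil : J <> nil by move=> J0; rewrite J0 in size_J.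
have [g [z [g_inj g_J zP]]] := indep_set_tuples i0 indep_J uniq_J J_nil (ltnW size_J).
pose inB c := if excluded_middle_informative (B c) is left _ then true else false.
pose code (s : m.-tuple 'I_k) :=
  [tuple letter i0 (tnth s j) (inB (shift (g j) (z s))) | j < m].
have [|X [P [uniq_P size_P shatters_P]]] := shattered code.
  by move=> s j; rewrite tnth_mktuple; eexists.
(* Prescribing the letters [letter i0 t X] on [P] realises every choice of the
   sets, with [A i0] refined to [B] if [X] holds and to [~ B], hence to [C],
   otherwise. *)
exists (map g P); split.
- apply: List.NoDup_map_NoDup_ForallPairs; first by move=> ? ? _ _ /g_inj.
  by apply: uniq_NoDup.
- by apply/leP; rewrite -(size_map g) in size_P.
suff indep_X : indep_set Z (dfwith A (i := i0) (if X then B else C)) (map g P).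
  by case: X {shatters_P} indep_X; [left|right].
move=> I I_nil I_P s_out.
have [|s code_s] := shatters_P (fun j => letter i0 (s_out (g j)) X).
  by move=> j _; apply: letter_in_class.
have [Zz Az] := zP s; exists (z s); split=> // h /I_P /List.in_map_iff [j [<- /In_mem P_j]].
have [eq_s eq_X] := letter_inj (etrans (esym (tnth_mktuple _ j)) (code_s j P_j)).
move: (Az j) eq_X; rewrite eq_s; case: dfwithP => // Ai0 /(_ erefl).
rewrite /inB; case: excluded_middle_informative => [Bz <-|nBz <-] //.
by case: (A_sub_BC Ai0).
Qed.

End SplitOneSet.

Section Refinement.

Variables (G : DGroup) (Sigma : finType) (Z : cfg G Sigma -> Prop).

Lemma arb_large_indep_split k (A : 'I_k -> cfg G Sigma -> Prop) i0 (B C : cfg G Sigma -> Prop) :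
  (forall z, A i0 z -> B z \/ C z) -> arb_large_indep Z A ->
  arb_large_indep Z (dfwith A (i := i0) B) \/ arb_large_indep Z (dfwith A (i := i0) C).
Proof.
move=> A_sub_BC indepA.
case: (classic (arb_large_indep Z (dfwith A (i := i0) B))) => [|/not_all_ex_not [N1 not_B]].
  by left.
right=> N; have [J [uniq_J /leP size_J [indep_B|indep_C]]] :=
  indep_set_split A_sub_BC (maxn N N1) indepA.
  by case: not_B; exists J; do 2 split=> //; apply/leP/(leq_trans _ size_J); rewrite leq_maxr.
by exists J; do 2 split=> //; apply/leP/(leq_trans _ size_J); rewrite leq_maxl.
Qed.

Lemma arb_large_indep_cover k (A : 'I_k -> cfg G Sigma -> Prop) i0 (T : Type)
    (l : list T) (B : T -> cfg G Sigma -> Prop) :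
  (forall z, A i0 z -> exists2 t, List.In t l & B t z) -> arb_large_indep Z A ->
  exists2 t, List.In t l & arb_large_indep Z (dfwith A (i := i0) (B t)).
Proof.
elim: l A => [|t l IH] A cover indepA.
  by have [c /cover [t []]] := arb_large_indep_nonempty i0 indepA.
pose C z := exists2 t', List.In t' l & B t' z.
have A_sub_BC z : A i0 z -> B t z \/ C z.
  by move=> /cover [t' [<-|l_t'] Bz]; [left | right; exists t'].
case: (arb_large_indep_split A_sub_BC indepA) => [indepB|indepC]; first by exists t; [left|].
have [|t' l_t' indep_t'] := IH _ _ indepC; first by move=> z; rewrite dfwith_in.
exists t'; first by right.
apply: arb_large_indep_mono indep_t' => j z.
by case: (eqVneq i0 j) => [<-|ne_j]; rewrite ?dfwith_in // !dfwith_out.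
Qed.

Lemma arb_large_indep_refine n (A : 'I_n -> cfg G Sigma -> Prop) (T : finType) (t0 : T)
    (B : 'I_n -> T -> cfg G Sigma -> Prop) :
  (forall i z, A i z -> exists t, B i t z) -> arb_large_indep Z A ->
  exists tau : 'I_n -> T, arb_large_indep Z (fun i => B i (tau i)).
Proof.
move=> cover indepA.
suff refine_on : forall l : seq 'I_n, exists tau : 'I_n -> T,
    arb_large_indep Z (fun i => if i \in l then B i (tau i) else A i).
  have [tau indep_tau] := refine_on (enum 'I_n); exists tau.
  apply: arb_large_indep_mono indep_tau => i z.
  by rewrite mem_enum.
elim=> [|i l [tau indep_tau]]; first by exists (fun _ => t0).
pose D j := if j \in l then B j (tau j) else A j.
have [|t _ indep_t] := @arb_large_indep_cover _ D i _ (enum T) (B i) _ indep_tau.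
  move=> z; rewrite /D; case: ifP => _ Dz; first by exists (tau i); rewrite ?In_mem ?mem_enum.
  by have [t Bt] := cover i z Dz; exists t; rewrite ?In_mem ?mem_enum.
exists (dfwith tau (i := i) t); apply: arb_large_indep_mono indep_t => j z.
case: (eqVneq i j) => [<-|ne_ij]; first by rewrite !dfwith_in in_cons eqxx.
by rewrite !dfwith_out // in_cons eq_sym (negbTE ne_ij).
Qed.

End Refinement.

(** * Configurations, limits and recurrence *)

Lemma ginvM (G : DGroup) (a b : G) : ginv (gmul a b) = gmul (ginv b) (ginv a).
Proof.
have inv_ab : gmul (gmul (ginv b) (ginv a)) (gmul a b) = gone G.
  by rewrite -gmulA (gmulA (ginv a)) gmulV gmul1 gmulV.
by rewrite -[RHS]gmulg1 -(gmulgV (gmul a b)) gmulA inv_ab gmul1.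
Qed.

Lemma shiftM (G : DGroup) (Sigma : finType) (g h : G) (x : cfg G Sigma) :
  shift g (shift h x) = shift (gmul g h) x.
Proof. by apply: functional_extensionality => u; rewrite /shift ginvM gmulA. Qed.

Section Configurations.

Variables (G : DGroup) (Sigma : finType) (f : G -> nat).

Definition agree_below (r : nat) (c c' : cfg G Sigma) : Prop :=
  forall g, f g < r -> c g = c' g.

Definition cfg_update (c : cfg G Sigma) (g0 : G) (s : Sigma) : cfg G Sigma :=
  fun h => if excluded_middle_informative (h = g0) then s else c h.

Lemma agree_below_le r r' c c' : r <= r' -> agree_below r' c c' -> agree_below r c c'.
Proof. by move=> le_r agree g lt_g; apply/agree/(leq_trans lt_g). Qed.

Lemma agree_below_list (F : list G) :
  exists r, forall c c', agree_below r c c' -> forall h, List.In h F -> c h = c' h.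
Proof.
suff [r F_r] : exists r, forall g, List.In g F -> f g < r.
  by exists r => c c' agree h /F_r; apply: agree.
elim: F => [|a F [r F_r]]; first by exists 0.
exists (maxn (f a).+1 r) => g /= [<-|/F_r lt_g]; first by rewrite leq_max leqnn.
by rewrite leq_max lt_g orbT.
Qed.

Lemma closed_cfg_limit (X : cfg G Sigma -> Prop) c :
  closed_cfg X -> (forall r, exists2 c', X c' & agree_below r c' c) -> X c.
Proof.
move=> closedX approx; apply: NNPP => Xc; have [F F_notX] := closedX c Xc.
have [r agree_F] := agree_below_list F; have [c' Xc' agree_r] := approx r.
by apply: F_notX Xc' => h; apply: agree_F.
Qed.

Lemma agree_below_update r g0 c s : f g0 = r -> agree_below r c (cfg_update c g0 s).
Proof.
move=> f_g0 g lt_g; rewrite /cfg_update; case: excluded_middle_informative => // eq_g.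
by exfalso; move: lt_g; rewrite eq_g f_g0 ltnn.
Qed.

Lemma nbhd_in_agree_below (X U : cfg G Sigma -> Prop) x :
  nbhd_in X x U -> exists r, forall c, X c -> agree_below r c x -> U c.
Proof.
move=> [_ [V [openV [Vx XV_U]]]]; have [F F_V] := openV x Vx.
have [r agree_F] := agree_below_list F.
by exists r => c Xc agree_c; apply: XV_U => //; apply: F_V => h /(agree_F _ _ agree_c).
Qed.

Hypothesis f_inj : injective f.

Lemma agree_below_update_succ r g0 c z :
  f g0 = r -> agree_below r z c -> agree_below r.+1 z (cfg_update c g0 (z g0)).
Proof.
move=> f_g0 agree g; rewrite ltnS leq_eqVlt /cfg_update.
case: excluded_middle_informative => [eq_g _|ne_g /orP [/eqP f_g|/agree //]].
  by subst g.
by case: ne_g; apply: f_inj; rewrite f_g f_g0.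
Qed.

Lemma agree_below_succ_gap r c c' :
  (forall g, f g <> r) -> agree_below r c c' -> agree_below r.+1 c c'.
Proof. by move=> gap agree g; rewrite ltnS leq_eqVlt => /orP [/eqP /gap|/agree]. Qed.

Lemma initial_segment_finite r : exists F, forall h, f h < r -> List.In h F.
Proof.
elim: r => [|r [F F_r]]; first by exists nil.
case: (classic (exists h, f h = r)) => [[h0 f_h0]|gap].
  exists (h0 :: F) => h; rewrite ltnS leq_eqVlt => /orP [/eqP f_h|/F_r]; last by right.
  by left; apply: f_inj; rewrite f_h f_h0.
exists F => h; rewrite ltnS leq_eqVlt => /orP [/eqP f_h|/F_r //].
by case: gap; exists h.
Qed.

Lemma open_agree_below r c0 : open_cfg (fun c => agree_below r c c0).
Proof.
move=> c agree_c; have [F F_r] := initial_segment_finite r.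
by exists F => c' agree_F h lt_h; rewrite agree_F; [apply: agree_c | apply: F_r].
Qed.

Lemma nbhd_in_ball (X : cfg G Sigma -> Prop) x r :
  nbhd_in X x (fun c => X c /\ agree_below r c x).
Proof.
split=> [c []//|]; exists (fun c => agree_below r c x).
by split; [apply: open_agree_below | split=> // c Xc].
Qed.

End Configurations.

Lemma finite_choice_antitone (T : finType) (P : T -> nat -> Prop) :
  (forall t m m', m <= m' -> P t m' -> P t m) -> (forall m, exists t, P t m) ->
  exists t, forall m, P t m.
Proof.
move=> P_anti P_ex; apply: NNPP => no_t.
have bad t : exists m, ~ P t m.
  by apply: NNPP => all_m; apply: no_t; exists t => m; apply: NNPP => nP; apply: all_m; exists m.
pose m_ t := sval (constructive_indefinite_description _ (bad t)).
have [t Pt] := P_ex (\max_t m_ t).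
apply: (svalP (constructive_indefinite_description _ (bad t))).
by apply: P_anti Pt; apply: leq_bigmax.
Qed.

Section Limit.

Variables (G : DGroup) (Sigma : finType) (f : G -> nat) (I : Type).
Variable P : nat -> (I -> cfg G Sigma) -> Prop.

Let agree_all r (x x' : I -> cfg G Sigma) := forall i, agree_below f r (x i) (x' i).

Hypothesis P_agree : forall r x x', P r x -> agree_all r x x' -> P r x'.
Hypothesis P_succ : forall r x, P r x -> exists x', agree_all r x x' /\ P r.+1 x'.

(* The limit takes at [g] the value of the [(f g).+1]-th approximation, after
   which that coordinate no longer changes. *)
Lemma exists_limit x0 : P 0 x0 -> exists x, forall r, P r x.
Proof.
move=> P0; pose next r x := if excluded_middle_informative (P r x) is left Prx
  then sval (constructive_indefinite_description _ (P_succ Prx)) else x.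
have next_spec r x : P r x -> agree_all r x (next r x) /\ P r.+1 (next r x).
  rewrite /next => Prx; case: excluded_middle_informative => [{}Prx|//].
  by case: constructive_indefinite_description.
pose fix approx r := if r is r'.+1 then next r' (approx r') else x0.
have P_approx r : P r (approx r) by elim: r => //= r /next_spec [].
have approx_agree r d : agree_all r (approx r) (approx (r + d)).
  elim: d => [|d IH] i g lt_g; first by rewrite addn0.
  rewrite (IH i g lt_g) addnS; apply: (next_spec _ _ (P_approx _)).1.
  exact: leq_trans lt_g (leq_addr _ _).
exists (fun i g => approx (f g).+1 i g) => r; apply: P_agree (P_approx r) _ => i g lt_g.
by have := approx_agree (f g).+1 (r - (f g).+1); rewrite subnKC // => /(_ i g (ltnSn _)).
Qed.

End Limit.

Section Recurrence.

Variables (G : DGroup) (Sigma : finType) (f : G -> nat).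
Hypotheses (f_inj : injective f) (G_infinite : infinite_type G).

Lemma exists_accumulation_point (v : G -> cfg G Sigma) :
  exists c, forall r (L : list G), exists2 h, ~ List.In h L & agree_below f r (v h) c.
Proof.
pose P r (x : unit -> cfg G Sigma) :=
  forall L, exists2 h, ~ List.In h L & agree_below f r (v h) (x tt).
suff [x Px] : exists x, forall r, P r x by exists (x tt).
apply: (@exists_limit G Sigma f unit P _ _ (fun _ => v (gone G))).
- move=> r x x' Px agree L; have [h h_L agree_h] := Px L.
  by exists h => // g lt_g; rewrite agree_h // agree.
- move=> r x Px; case: (classic (exists g0, f g0 = r)) => [[g0 f_g0]|gap]; last first.
    exists x; split=> // L; have [h h_L agree_h] := Px L.
    by exists h => //; apply: agree_below_succ_gap => // g f_g; apply: gap; exists g.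
  suff [s Ps] : exists s, P r.+1 (fun _ => cfg_update (x tt) g0 s).
    by exists (fun _ => cfg_update (x tt) g0 s); split=> // -[]; apply: agree_below_update.
  (* Otherwise each value at [g0] is avoided outside some finite list. *)
  apply: NNPP => no_s.
  have avoid s : exists L, ~ exists2 h, ~ List.In h L &
      agree_below f r.+1 (v h) (cfg_update (x tt) g0 s).
    by apply: not_all_ex_not => Ps; apply: no_s; exists s.
  pose Ls s := sval (constructive_indefinite_description _ (avoid s)).
  have [h h_L agree_h] := Px (List.flat_map Ls (enum Sigma)).
  apply: (svalP (constructive_indefinite_description _ (avoid (v h g0)))).
  exists h; last exact: agree_below_update_succ.
  move=> h_Ls; apply: h_L; apply/List.in_flat_map; exists (v h g0); split=> //.
  by rewrite In_mem mem_enum.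
- by move=> L; have [h h_L] := infinite_type_fresh G_infinite L; exists h.
Qed.

Lemma return_times_unbounded (X : cfg G Sigma -> Prop) w (W : cfg G Sigma -> Prop) :
  minimal_subshift X -> X w -> open_cfg W -> W w ->
  forall N, exists L, [/\ List.NoDup L, (N <= length L)%coq_nat &
    forall h, List.In h L -> W (shift h w)].
Proof.
(* If all returns lay in [L], minimality would move an accumulation point [c]
   of the orbit into [W] by some [g0], and then [shift (g0 h) w] would lie in
   [W] for [h] far out in the orbit, avoiding [ginv g0 L]. *)
move=> [[_ [closedX shiftX]] minX] Xw openW Ww; apply: long_NoDup_lists => L.
apply: NNPP => bounded.
have returns_L h : W (shift h w) -> List.In h L.
  by move=> Wh; apply: NNPP => h_L; apply: bounded; exists h.
have [c c_acc] := exists_accumulation_point (fun h => shift h w).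
have Xc : X c.
  apply: (closed_cfg_limit (f := f) closedX) => r; have [h _ agree_h] := c_acc r nil.
  by exists (shift h w) => //; apply: shiftX.
have [g0 W_g0c] := minX c Xc W openW (ex_intro _ w (conj Xw Ww)).
have [F F_W] := openW _ W_g0c.
have [r agree_F] := agree_below_list Sigma f (List.map (gmul (ginv g0)) F).
have [h h_L agree_h] := c_acc r (List.map (gmul (ginv g0)) L).
apply: h_L; apply/List.in_map_iff; exists (gmul g0 h); split.
  by rewrite gmulA gmulV gmul1.
apply: returns_L; rewrite -shiftM; apply: F_W => u F_u.
exact: (agree_F _ _ agree_h _ (List.in_map _ _ _ F_u)).
Qed.

End Recurrence.

(** * Independence along the factor map *)

Section FactorMap.

Variables (G1 G2 : DGroup) (Sigma : finType) (phi : G1 -> G2).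
Variables (X : cfg G2 Sigma -> Prop) (Y : cfg G1 Sigma -> Prop).
Variable pi : cfg G2 Sigma -> cfg G1 Sigma.
Hypotheses (pi_XY : forall x, X x -> Y (pi x))
  (pi_cont : continuous_on X pi)
  (pi_equiv : forall (g : G1) x, X x -> shift g (pi x) = pi (shift (phi g) x)).

Lemma nbhd_in_preimage x (U : cfg G1 Sigma -> Prop) :
  X x -> nbhd_in Y (pi x) U -> nbhd_in X x (fun c => X c /\ U (pi c)).
Proof.
move=> Xx [_ [V [openV [Vx YV_U]]]]; split=> [c []//|].
have [W [openW VW]] := pi_cont openV.
exists W; split=> //; split; first exact/(VW _ Xx).
by move=> c Xc Wc; split=> //; apply: YV_U; [apply: pi_XY | apply/(VW _ Xc)].
Qed.

Lemma arb_large_indep_factor k (A : 'I_k -> cfg G1 Sigma -> Prop) :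
  (forall b, exists a, phi a = b) ->
  arb_large_indep X (fun i c => X c /\ A i (pi c)) -> arb_large_indep Y A.
Proof.
move=> phi_surj indepX N; pose sec b := sval (constructive_indefinite_description _ (phi_surj b)).
have secK b : phi (sec b) = b by rewrite /sec; case: constructive_indefinite_description.
have [J [uniq_J [size_J indep_J]]] := indepX N.
exists (List.map sec J); split; [|split].
- by apply: List.NoDup_map_NoDup_ForallPairs => // a b _ _ eq_sec; rewrite -(secK a) eq_sec secK.
- by rewrite List.length_map.
move=> I I_nil I_J s.
have phiI_J h : List.In h (List.map phi I) -> List.In h J.
  by case/List.in_map_iff => g [<- /I_J /List.in_map_iff [h' [<- J_h']]]; rewrite secK.
have [|w [Xw Aw]] := indep_J _ _ phiI_J (fun h => s (sec h)); first by case: I {I_J phiI_J} I_nil.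
exists (pi w); split=> [|g I_g]; first exact: pi_XY.
have [h [eq_g _]] := (List.in_map_iff _ _ _).1 (I_J g I_g); subst g.
by have [_] := Aw _ (List.in_map phi _ _ I_g); rewrite pi_equiv // !secK.
Qed.

Lemma IN_factor (phi_surj : forall b, exists a, phi a = b) n (x : 'I_n -> cfg G2 Sigma) :
  IN X x -> IN Y (fun i => pi (x i)).
Proof.
move=> [Xx INx]; split=> [i|U U_nbhd]; first exact: pi_XY.
apply: arb_large_indep_factor => //; apply: INx => i.
exact: nbhd_in_preimage.
Qed.

Lemma continuous_on_agree_below (f1 : G1 -> nat) (f2 : G2 -> nat) x m :
  injective f1 -> X x ->
  exists r, forall c, X c -> agree_below f2 r c x -> agree_below f1 m (pi c) (pi x).
Proof.
move=> f1_inj Xx; have [W [openW VW]] := pi_cont (open_agree_below f1_inj (r := m) (c0 := pi x)).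
have [F F_W] := openW x (proj1 (VW x Xx) (fun _ _ => erefl)).
have [r agree_F] := agree_below_list Sigma f2 F.
by exists r => c Xc agree_c; apply/(VW c Xc)/F_W => h /(agree_F _ _ agree_c).
Qed.

End FactorMap.

Section Lifting.

Variables (G1 G2 : DGroup) (Sigma : finType) (phi : G1 -> G2).
Variables (X : cfg G2 Sigma -> Prop) (Y : cfg G1 Sigma -> Prop).
Variable pi : cfg G2 Sigma -> cfg G1 Sigma.
Hypotheses (X_minimal : minimal_subshift X)
  (pi_onto : forall y, Y y -> exists x, X x /\ pi x = y)
  (pi_cont : continuous_on X pi)
  (pi_equiv : forall (g : G1) x, X x -> shift g (pi x) = pi (shift (phi g) x)).

Lemma indep_set_lift k (A : 'I_k -> cfg G1 Sigma -> Prop) J :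
  indep_set Y A J -> indep_set X (fun i c => X c /\ A i (pi c)) (List.map phi J).
Proof.
move=> indep_J I I_nil I_J s; have [[_ [_ shiftX]] _] := X_minimal.
pose pre h := if excluded_middle_informative (exists g, phi g = h /\ List.In g J) is left ex_g
  then sval (constructive_indefinite_description _ ex_g) else gone G1.
have preP h : List.In h (List.map phi J) -> phi (pre h) = h /\ List.In (pre h) J.
  move/List.in_map_iff => ex_g; rewrite /pre; case: excluded_middle_informative => // {}ex_g.
  by case: constructive_indefinite_description.
have [||z [Yz Az]] := indep_J (List.map pre I) _ _ (fun g => s (phi g)).
- by case: I {I_J} I_nil.
- by move=> g /List.in_map_iff [h [<- /I_J /preP []]].
have [w [Xw eq_z]] := pi_onto Yz; exists w; split=> // h I_h.
have [phi_pre _] := preP h (I_J h I_h).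
split; first exact: shiftX.
by have := Az _ (List.in_map pre _ _ I_h); rewrite -eq_z pi_equiv // phi_pre.
Qed.

Lemma indep_set_phi_injective k (A : 'I_k -> cfg G1 Sigma -> Prop) a b J :
  (forall c, A a c -> A b c -> False) -> indep_set Y A J ->
  forall g1 g2, List.In g1 J -> List.In g2 J -> phi g1 = phi g2 -> g1 = g2.
Proof.
move=> disj indep_J g1 g2 J_g1 J_g2 eq_phi; apply: NNPP => ne_g.
pose s g := if excluded_middle_informative (g = g1) then a else b.
have sub_J h : List.In h [:: g1; g2] -> List.In h J by case=> [<-|[<-|[]]].
have [//|z [Yz Az]] := indep_J [:: g1; g2] _ sub_J s.
have [w [Xw eq_z]] := pi_onto Yz.
have s_g1 : s g1 = a by rewrite /s; case: excluded_middle_informative.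
have s_g2 : s g2 = b.
  by rewrite /s; case: excluded_middle_informative => // eq_g; exfalso; apply: ne_g.
move: (Az g1 (or_introl erefl)) (Az g2 (or_intror (or_introl erefl))).
by rewrite s_g1 s_g2 -eq_z !pi_equiv // eq_phi; apply: disj.
Qed.

Lemma arb_large_indep_lift k (A : 'I_k -> cfg G1 Sigma -> Prop) a b :
  (forall c, A a c -> A b c -> False) ->
  arb_large_indep Y A -> arb_large_indep X (fun i c => X c /\ A i (pi c)).
Proof.
move=> disj indepY N; have [J [uniq_J [size_J indep_J]]] := indepY N.
exists (List.map phi J); split; [|split].
- apply: List.NoDup_map_NoDup_ForallPairs => //.
  exact: indep_set_phi_injective disj indep_J.
- by rewrite List.length_map.
exact: indep_set_lift.
Qed.

Variables (f1 : G1 -> nat) (f2 : G2 -> nat).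
Hypotheses (f1_inj : injective f1) (f2_inj : injective f2) (G2_infinite : infinite_type G2).
Variables (n : nat) (y : 'I_n -> cfg G1 Sigma).
Hypothesis y_IN : IN Y y.

Definition fiber_nbhd r m (x : 'I_n -> cfg G2 Sigma) i (z : cfg G2 Sigma) : Prop :=
  [/\ X z, agree_below f1 m (pi z) (y i) & agree_below f2 r z (x i)].

Definition liftable r (x : 'I_n -> cfg G2 Sigma) : Prop :=
  forall m, arb_large_indep X (fiber_nbhd r m x).

Lemma fiber_nbhd_mono r r' m m' x i z :
  r <= r' -> m <= m' -> fiber_nbhd r' m' x i z -> fiber_nbhd r m x i z.
Proof.
move=> le_r le_m [Xz agree_pi agree_z].
by split=> //; [exact: agree_below_le le_m agree_pi | exact: agree_below_le le_r agree_z].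
Qed.

Lemma liftable_agree r x x' :
  liftable r x -> (forall i, agree_below f2 r (x i) (x' i)) -> liftable r x'.
Proof.
move=> lift_x agree_x m; apply: arb_large_indep_mono (lift_x m) => i z [Xz agree_pi agree_z].
by split=> // g lt_g; rewrite agree_z // agree_x.
Qed.

Lemma liftable0_separated x a b : y a <> y b -> liftable 0 x.
Proof.
move=> ne_ab m; have [h0 ne_h0] : exists h0, y a h0 <> y b h0.
  apply: NNPP => eq_ab; apply/ne_ab/functional_extensionality => h.
  by apply: NNPP => ne_h; apply: eq_ab; exists h.
pose m' := maxn m (f1 h0).+1; pose U i c := Y c /\ agree_below f1 m' c (y i).
have disj c : U a c -> U b c -> False.
  have lt_h0 : f1 h0 < m' by rewrite leq_max ltnSn orbT.
  by move=> [_ /(_ h0 lt_h0) c_a] [_ /(_ h0 lt_h0) c_b]; apply: ne_h0; rewrite -c_a -c_b.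
have := arb_large_indep_lift disj (y_IN.2 U (fun i => nbhd_in_ball f1_inj Y (y i) m')).
apply: arb_large_indep_mono => i z [Xz [_ agree_z]].
by split=> //; apply: agree_below_le agree_z; rewrite leq_maxl.
Qed.

Lemma liftable0_constant x : (forall a b, y a = y b) -> liftable 0 x.
Proof.
move=> y_const m N; have [n0|n_gt0] := posnP n.
  have fresh L : exists2 h : G2, True & ~ List.In h L.
    by have [h h_L] := infinite_type_fresh G2_infinite L; exists h.
  have [L [uniq_L size_L _]] := long_NoDup_lists fresh N.
  exists L; do 2 split=> //; move=> [|g I] // _ _ s.
  by have := leq_trans (ltn_ord (s g)) (eq_leq n0).
pose i0 := Ordinal n_gt0; have [w0 [Xw0 pi_w0]] := pi_onto (y_IN.1 i0).
have [W [openW VW]] := pi_cont (open_agree_below f1_inj (r := m) (c0 := y i0)).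
have Ww0 : W w0 by apply/(VW _ Xw0); rewrite pi_w0.
have [[_ [_ shiftX]] _] := X_minimal.
have [L [uniq_L size_L L_W]] := return_times_unbounded f2_inj G2_infinite X_minimal Xw0 openW Ww0 N.
exists L; do 2 split=> //; move=> I _ I_L s; exists w0; split=> // h I_h.
have Xh := shiftX h w0 Xw0; split=> //; rewrite (y_const (s h) i0).
exact/(VW _ Xh)/L_W/I_L.
Qed.

Lemma liftable0 x : liftable 0 x.
Proof.
case: (classic (exists a b, y a <> y b)) => [[a [b /liftable0_separated //]]|all_eq].
by apply: liftable0_constant => a b; apply: NNPP => ne_ab; apply: all_eq; exists a, b.
Qed.

Lemma liftable_succ r x :
  liftable r x -> exists x', (forall i, agree_below f2 r (x i) (x' i)) /\ liftable r.+1 x'.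
Proof.
move=> lift_r; case: (classic (exists g0, f2 g0 = r)) => [[g0 f_g0]|gap]; last first.
  exists x; split=> // m; apply: arb_large_indep_mono (lift_r m) => i z [Xz agree_pi agree_z].
  by split=> //; apply: agree_below_succ_gap agree_z => // g f_g; apply: gap; exists g.
pose x_ (tau : {ffun 'I_n -> Sigma}) i := cfg_update (x i) g0 (tau i).
have [[[w0 _] _] _] := X_minimal.
have refine m : exists tau, arb_large_indep X (fiber_nbhd r.+1 m (x_ tau)).
  have [|tau indep_tau] := arb_large_indep_refine (w0 g0)
    (B := fun i s => fiber_nbhd r.+1 m (fun j => cfg_update (x j) g0 s) i) _ (lift_r m).
    move=> i z [Xz agree_pi agree_z]; exists (z g0); split=> //.
    exact: agree_below_update_succ.
  exists [ffun i => tau i]; apply: arb_large_indep_mono indep_tau => i z.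
  by rewrite /fiber_nbhd /x_ ffunE.
have antitone tau m m' : m <= m' -> arb_large_indep X (fiber_nbhd r.+1 m' (x_ tau)) ->
    arb_large_indep X (fiber_nbhd r.+1 m (x_ tau)).
  by move=> le_m; apply: arb_large_indep_mono => i z; apply: fiber_nbhd_mono.
have [tau lift_tau] := finite_choice_antitone antitone refine.
by exists (x_ tau); split=> // i; apply: agree_below_update.
Qed.

Lemma IN_lift : exists x, IN X x /\ forall i, y i = pi (x i).
Proof.
have [[[w0 Xw0] [closedX _]] _] := X_minimal.
have [xi lift_xi] := exists_limit liftable_agree liftable_succ (liftable0 (fun _ => w0)).
have near r m i : exists c, fiber_nbhd r m xi i c.
  exact: arb_large_indep_nonempty (lift_xi r m).
have X_xi i : X (xi i).
  apply: (closed_cfg_limit (f := f2) closedX) => r.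
  by have [c [Xc _ agree_c]] := near r 0 i; exists c.
have pi_xi i : y i = pi (xi i).
  apply: functional_extensionality => h.
  have [r pi_agree] := continuous_on_agree_below pi_cont f2 (f1 h).+1 f1_inj (X_xi i).
  have [c [Xc agree_pi agree_c]] := near r (f1 h).+1 i.
  by rewrite -(agree_pi h (ltnSn _)) (pi_agree c Xc agree_c h (ltnSn _)).
exists xi; split=> //; split=> // U U_nbhd.
have r_ i := nbhd_in_agree_below f2 (U_nbhd i).
pose r i := sval (constructive_indefinite_description _ (r_ i)).
apply: arb_large_indep_mono (lift_xi (\max_i r i) 0) => i z [Xz _ agree_z].
apply: (svalP (constructive_indefinite_description _ (r_ i))) => //.
by apply: agree_below_le agree_z; apply: leq_bigmax.
Qed.

End Lifting.

Unset Implicit Arguments.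

Theorem proposition3p3
  (G1 G2 : DGroup) (Sigma : finType) (phi : G1 -> G2)
  (X : cfg G2 Sigma -> Prop) (Y : cfg G1 Sigma -> Prop)
  (pi : cfg G2 Sigma -> cfg G1 Sigma) :
  countable_type G1 -> infinite_type G1 ->
  countable_type G2 -> infinite_type G2 ->
  group_hom phi -> (forall b : G2, exists a : G1, phi a = b) ->
  minimal_subshift X -> minimal_subshift Y ->
  (forall x, X x -> Y (pi x)) ->
  (forall y, Y y -> exists x, X x /\ pi x = y) ->
  continuous_on X pi ->
  (forall (g : G1) x, X x -> shift g (pi x) = pi (shift (phi g) x)) ->
  forall (n : nat) (y : 'I_n -> cfg G1 Sigma),
    IN Y y <-> exists x : 'I_n -> cfg G2 Sigma,
      IN X x /\ forall i, y i = pi (x i).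
Proof.
move=> [f1 f1_inj] _ [f2 f2_inj] G2_infinite _ phi_surj X_minimal _ pi_XY pi_onto pi_cont
  pi_equiv n y; split=> [y_IN|[x [x_IN y_pi]]].
  exact: (IN_lift X_minimal pi_onto pi_cont pi_equiv (f1_inj : injective f1)
    (f2_inj : injective f2) G2_infinite y_IN).
have -> : y = (fun i => pi (x i)) by apply: functional_extensionality.
exact: (IN_factor pi_XY pi_cont pi_equiv phi_surj x_IN).
Qed.
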